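(* Let $L$ be a hyperbolic lattice of rank $m+1$ with a fixed positive cone $\mathcal{P}_L$, and let $f$ be a non-zero vector in the closure $\overline{\mathcal{P}}_L$ with $f^2=0$. Let $\alpha>0$ and let $\mathrm{HS}_\alpha$ be the horosphere $\{x\in\mathcal{P}_L : \langle x,f\rangle^2/x^2=\alpha\}/\mathbb{R}_{>0}$ with base $b=\mathbb{R}_{>0}f$. Put $$c(f,\mathrm{HS}_\alpha):=\sup\Big\{-\frac{\langle v,f\rangle^2}{v^2} \;:\; v\in\mathcal{N}_L,\ \text{there exists } x\in\mathcal{P}_L \text{ with } \langle x,v\rangle=0 \text{ and } \frac{\langle x,f\rangle^2}{x^2}=\alpha\Big\}.$$ Then $c(f,\mathrm{HS}_\alpha)\le\alpha$.
   Context: A hyperbolic lattice is a free $\mathbb{Z}$-module $L$ of finite rank $n>1$ with a non-degenerate symmetric bilinear form $\langle\ ,\ \rangle$ with values in $\mathbb{Z}$ of signature $(1,n-1)$; the form is extended to $L\otimes\mathbb{R}$ and $x^2:=\langle x,x\rangle$. A positive cone $\mathcal{P}_L$ is one of the two connected components of $\{x\in L\otimes\mathbb{R}: x^2>0\}$, and $\overline{\mathcal{P}}_L$ is its closure. $\mathcal{N}_L:=\{v\in L\otimes\mathbb{R}: v^2<0\}$. The hyperbolic space is $\mathcal{H}_L=\mathcal{P}_L/\mathbb{R}_{>0}$, and the horospheres with base the boundary point $b=\mathbb{R}_{>0}f$ are the level sets of the function $x\mapsto\langle x,f\rangle^2/x^2$ on $\mathcal{H}_L$. *)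

From HB Require Import structures.
From mathcomp Require Import all_boot all_order all_algebra.
From mathcomp Require Import all_classical all_reals all_analysis.
Set Implicit Arguments. Unset Strict Implicit. Unset Printing Implicit Defensive.
Import Order.TTheory GRing.Theory Num.Theory.
Import numFieldNormedType.Exports.
Local Open Scope ring_scope.
Local Open Scope classical_set_scope.

(* A lattice L of rank n is Z^n with an integral Gram matrix G; its real
   extension L (x) R is 'rV[R]_n with the bilinear form below. *)

Definition gramR (R : realType) (n : nat) (G : 'M[int]_n) : 'M[R]_n :=
  map_mx (fun z : int => z%:~R) G.

Definition bform (R : realType) (n : nat) (G : 'M[int]_n) (x y : 'rV[R]_n) : R :=
  (x *m gramR R G *m y^T) 0 0.

Definition qform (R : realType) (n : nat) (G : 'M[int]_n) (x : 'rV[R]_n) : R :=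
  bform G x x.

Definition sig_diag (R : realType) (m : nat) : 'M[R]_m.+1 :=
  diag_mx (\row_(i < m.+1) (if i == ord0 then 1 else -1)).

(* G is a hyperbolic lattice of rank m+1 (m+1 > 1): symmetric, integral,
   non-degenerate, of real signature (1, m) (Sylvester). *)
Definition hyperbolic_lattice (R : realType) (m : nat) (G : 'M[int]_m.+1) : Prop :=
  [/\ (0 < m)%N, G^T = G, \det G != 0 &
      exists P : 'M[R]_m.+1, P \in unitmx /\ P *m gramR R G *m P^T = sig_diag R m].

Definition posset (R : realType) (n : nat) (G : 'M[int]_n) : set 'rV[R]_n :=
  [set x | 0 < qform G x].

Definition positive_cone (R : realType) (n : nat) (G : 'M[int]_n)
    (P : set 'rV[R]_n) : Prop :=
  exists x0, posset G x0 /\ P = connected_component (T := 'rV[R]_n) (posset G) x0.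

Definition negset (R : realType) (n : nat) (G : 'M[int]_n) : set 'rV[R]_n :=
  [set v | qform G v < 0].

(* c(f, HS_alpha) as an extended real (supremum; -oo if the set is empty) *)
Definition c_horo (R : realType) (n : nat) (G : 'M[int]_n) (P : set 'rV[R]_n)
    (f : 'rV[R]_n) (alpha : R) : \bar R :=
  ereal_sup [set (- (bform G v f) ^+ 2 / qform G v)%:E | v in
     [set v | negset G v /\
        exists x, P x /\ bform G x v = 0 /\
                  (bform G x f) ^+ 2 / qform G x = alpha]].

(* In coordinates diagonalising the form, x^2 <= x_0^2, so a positive x and any
   y combine into z = y_0 x - x_0 y with z_0 = 0, whence z^2 <= 0: this is the
   reverse Cauchy-Schwarz inequality x^2 y^2 <= <x,y>^2 for x^2 > 0.  Given v
   orthogonal to x with v^2 < 0, apply it to w = <v,f> v - v^2 f; since f is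
   isotropic, w^2 = -<v,f>^2 v^2 and <x,w> = -v^2 <x,f>, which rearranges to
   -<v,f>^2/v^2 <= <x,f>^2/x^2 = alpha. *)

From HB Require Import structures.
From mathcomp Require Import all_boot all_order all_algebra.
From mathcomp Require Import all_classical all_reals all_analysis.
From mathcomp Require Import ring lra.
Import Order.TTheory GRing.Theory Num.Theory.
Import numFieldNormedType.Exports.
Local Open Scope ring_scope.
Local Open Scope classical_set_scope.

Section ReverseCauchySchwarzBound.
Variables (R : realFieldType) (V : lmodType R) (form : V -> V -> R).
Hypothesis formDl : forall a b c, form (a + b) c = form a c + form b c.
Hypothesis formZl : forall k a c, form (k *: a) c = k * form a c.
Hypothesis formC : forall a b, form a b = form b a.
Hypothesis reverse_CauchySchwarz :
  forall x y, 0 < form x x -> form x x * form y y <= form x y ^+ 2.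

Lemma formDr a b c : form c (a + b) = form c a + form c b.
Proof. by rewrite formC formDl !(formC c). Qed.

Lemma formZr k a c : form c (k *: a) = k * form c a.
Proof. by rewrite formC formZl formC. Qed.

Lemma isotropic_orthogonal_ratio_le x v f :
  0 < form x x -> form x v = 0 -> form v v < 0 -> form f f = 0 ->
  - form v f ^+ 2 / form v v <= form x f ^+ 2 / form x x.
Proof.
move=> xpos xv vneg fiso.
have := @reverse_CauchySchwarz x (form v f *: v + (- form v v) *: f) xpos.
rewrite !(formDl, formDr, formZl, formZr) xv fiso (formC f v) => ineq.
rewrite -mulrNN -invrN ler_pdivrMr ?oppr_gt0 // mulrAC ler_pdivlMr // opprK.
rewrite -(@ler_pM2l _ (- form v v)) ?oppr_gt0 //; nra.
Qed.

End ReverseCauchySchwarzBound.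

Arguments formDr {R V form}.
Arguments formZr {R V form}.
Arguments isotropic_orthogonal_ratio_le {R V form}.

Section MinkowskiForm.
Variables (R : realType) (m : nat).
Local Notation V := 'rV[R]_m.+1.

Definition minkowski (a b : V) : R := (a *m sig_diag R m *m b^T) 0 0.

Lemma minkowskiE a b :
  minkowski a b = \sum_i a 0 i * (if i == ord0 then 1 else -1) * b 0 i.
Proof.
rewrite /minkowski /sig_diag mul_mx_diag !mxE; apply: eq_bigr => i _.
by rewrite !mxE.
Qed.

Lemma minkowskiDl a b c : minkowski (a + b) c = minkowski a c + minkowski b c.
Proof. by rewrite /minkowski !mulmxDl mxE. Qed.

Lemma minkowskiZl k a c : minkowski (k *: a) c = k * minkowski a c.
Proof. by rewrite /minkowski -!scalemxAl mxE. Qed.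

Lemma minkowskiC a b : minkowski a b = minkowski b a.
Proof. rewrite !minkowskiE; apply: eq_bigr => i _; ring. Qed.

Lemma minkowski_le_sqr0 a : minkowski a a <= a 0 0 ^+ 2.
Proof.
rewrite minkowskiE (bigD1 ord0) //= mulr1 -expr2 gerDl.
rewrite sumr_le0 // => i /negPf ->.
by rewrite mulrN1 mulNr oppr_le0 -expr2 sqr_ge0.
Qed.

Lemma minkowski_reverse_CauchySchwarz x y : 0 < minkowski x x ->
  minkowski x x * minkowski y y <= minkowski x y ^+ 2.
Proof.
move=> xpos.
have x0_bound := minkowski_le_sqr0 x.
have := minkowski_le_sqr0 (y 0 0 *: x - x 0 0 *: y).
have -> : (y 0 0 *: x - x 0 0 *: y) 0 0 = 0 by rewrite !mxE; ring.
rewrite expr0n /= -scaleNr.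
rewrite !(minkowskiDl, formDr minkowskiDl minkowskiC,
          minkowskiZl, formZr minkowskiZl minkowskiC) (minkowskiC y x).
set qx := minkowski x x in xpos x0_bound *; set qy := minkowski y y.
set b := minkowski x y; set x0 := x 0 0 in x0_bound *; set y0 := y 0 0 => z_bound.
have x0_pos : 0 < x0 ^+ 2 by lra.
(* qx z^2 = x0^2 (qx qy - b^2) + (y0 qx - x0 b)^2 *)
have : x0 ^+ 2 * (qx * qy - b ^+ 2) <= 0.
  have : qx * (y0 ^+ 2 * qx - 2 * y0 * x0 * b + x0 ^+ 2 * qy) <= 0.
    by apply: mulr_ge0_le0; [exact: ltW | nra].
  have : 0 <= (y0 * qx - x0 * b) ^+ 2 by apply: sqr_ge0.
  nra.
by rewrite pmulr_rle0 // subr_le0.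
Qed.

End MinkowskiForm.

Arguments minkowski {R m}.
Arguments minkowski_reverse_CauchySchwarz {R m}.

Lemma bform_minkowski {R : realType} {m : nat} {G : 'M[int]_m.+1} {Pm : 'M[R]_m.+1} :
  Pm \in unitmx -> Pm *m gramR R G *m Pm^T = sig_diag R m ->
  forall x y, bform G x y = minkowski (x *m invmx Pm) (y *m invmx Pm).
Proof.
move=> Punit Pdiag x y; rewrite /bform /minkowski.
have -> : gramR R G = invmx Pm *m sig_diag R m *m (invmx Pm)^T.
  by rewrite -Pdiag !mulmxA mulVmx // mul1mx -mulmxA -trmx_mul mulVmx // trmx1 mulmx1.
by rewrite !trmx_mul !mulmxA.
Qed.

Lemma bformDl {R : realType} {n : nat} (G : 'M[int]_n) (a b c : 'rV[R]_n) :
  bform G (a + b) c = bform G a c + bform G b c.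
Proof. by rewrite /bform !mulmxDl mxE. Qed.

Lemma bformZl {R : realType} {n : nat} (G : 'M[int]_n) k (a c : 'rV[R]_n) :
  bform G (k *: a) c = k * bform G a c.
Proof. by rewrite /bform -!scalemxAl mxE. Qed.

Lemma bformC {R : realType} {n : nat} (G : 'M[int]_n) (a b : 'rV[R]_n) :
  G^T = G -> bform G a b = bform G b a.
Proof.
move=> Gsym; have entry_tr (M : 'M[R]_1) : M 0 0 = M^T 0 0 by rewrite mxE.
rewrite /bform [RHS]entry_tr !trmx_mul trmxK /gramR.
by rewrite map_trmx Gsym mulmxA.
Qed.

Lemma hyperbolic_reverse_CauchySchwarz {R : realType} {m : nat} {G : 'M[int]_m.+1} :
  hyperbolic_lattice R G -> forall x y : 'rV[R]_m.+1, 0 < qform G x ->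
  qform G x * qform G y <= bform G x y ^+ 2.
Proof.
move=> [_ _ _ [Pm [Punit Pdiag]]] x y.
rewrite /qform !(bform_minkowski Punit Pdiag).
exact: minkowski_reverse_CauchySchwarz.
Qed.

Theorem lemma2p4 (R : realType) (m : nat) (G : 'M[int]_m.+1)
    (P : set 'rV[R]_m.+1) (f : 'rV[R]_m.+1) (alpha : R) :
  hyperbolic_lattice R G ->
  positive_cone G P ->
  f != 0 -> closure (T := 'rV[R]_m.+1) P f -> qform G f = 0 ->
  0 < alpha ->
  (c_horo G P f alpha <= alpha%:E)%E.
Proof.
move=> hypG [x0 [_ ->]] _ _ fiso _.
have [_ Gsym _ _] := hypG.
apply: ge_ereal_sup => _ [v [vneg [x [xcomp [xv <-]]]]] <-.
rewrite lee_fin.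
have xpos : 0 < qform G x by exact: connected_component_sub xcomp.
exact: (@isotropic_orthogonal_ratio_le _ 'rV[R]_m.+1 _ (bformDl G) (bformZl G)
          (fun a b => @bformC R _ G a b Gsym) (hyperbolic_reverse_CauchySchwarz hypG)).
Qed.
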